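(* In the setting below, under the persistent excitation assumption and the inexact disturbance bound assumption, the fixed-complexity parameter set $\Theta_t$ with periodic update converges with probability 1 to a subset of $\{\theta\in\mathbb{R}^p: M_\Theta(\theta-\theta^\ast)\le(\rho N_u\tau/\beta)\mathbf{1}\}$; that is, with probability 1, $\bigcap_{t\ge0}\Theta_t\subseteq\{\theta: M_\Theta(\theta-\theta^\ast)\le(\rho N_u\tau/\beta)\mathbf{1}\}$.
   Context: Setting: $\theta^\ast\in\mathbb{R}^p$ is a fixed (unknown) parameter vector. $\mathcal{W}=\{w\in\mathbb{R}^{n_x}:\Pi_w w\le\pi_w\}$ is a compact convex polytope with $\pi_w>0$. The disturbances $w_0,w_1,\dots$ are independent random vectors in $\mathbb{R}^{n_x}$. $D_0,D_1,\dots\in\mathbb{R}^{n_x\times p}$ is a given (non-random) sequence of regressor matrices. For $t\ge1$ the (random) unfalsified parameter set is $\Delta_t=\{\theta\in\mathbb{R}^p: D_{t-1}(\theta^\ast-\theta)+w_{t-1}\in\mathcal{W}\}$. $\|\cdot\|$ is the Euclidean norm (induced 2-norm for matrices); $\mathcal{B}=\{x\in\mathbb{R}^{n_x}:\|x\|\le1\}$; $\oplus$ is Minkowski sum; $\mathbf{1}$ is the vector of ones; vector inequalities are componentwise. Persistent excitation assumption: there exist $\tau>0$, $\beta>0$ and an integer $N_u\ge\lceil p/n_x\rceil$ such that for every $t\ge0$, $\|D_t\|\le\tau$ and $\sum_{j=t}^{t+N_u-1}D_j^\top D_j\succeq\beta I$. Inexact disturbance bound assumption: there exist a compact set $\Omega\subset\mathbb{R}^{n_x}$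 and $\rho>0$ with $\Omega\subseteq\mathcal{W}\subseteq\Omega\oplus\rho\mathcal{B}$, such that $w_t\in\Omega$ for all $t$, and a function $p_w:(0,\infty)\to(0,1]$ such that for all $w^0\in\partial\Omega$ (boundary of $\Omega$), all $\epsilon>0$ and all $t\ge0$, $\Pr\{\|w_t-w^0\|<\epsilon\}\ge p_w(\epsilon)$. Fixed-complexity parameter set with periodic update: $M_\Theta\in\mathbb{R}^{r\times p}$ has rows of unit Euclidean norm and is such that $\Theta(\mu):=\{\theta:M_\Theta\theta\le\mu\}$ is bounded for every $\mu\in\mathbb{R}^r$; $\Theta_0=\Theta(\mu_0)$ contains $\theta^\ast$. For $t\ge1$: if $t=kN_u$ for some integer $k\ge1$, then $\Theta_t=\Theta(\mu_t)$ with $[\mu_t]_i=\max\{[M_\Theta]_i\theta:\theta\in\Theta_{t-N_u}\cap\bigcap_{j=t-N_u+1}^t\Delta_j\}$ for $i=1,\dots,r$; otherwise $\Theta_t=\Theta_{t-1}$. *)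

From HB Require Import structures.
From mathcomp Require Import all_boot all_order all_algebra.
From mathcomp Require Import all_classical all_reals all_analysis.
Set Implicit Arguments. Unset Strict Implicit. Unset Printing Implicit Defensive.
Import Order.TTheory GRing.Theory Num.Theory.
Import numFieldNormedType.Exports.
Local Open Scope classical_set_scope.
Local Open Scope ring_scope.

Section Defs.
Variable R : realType.

Definition norm2 {n : nat} (v : 'cV[R]_n) : R := Num.sqrt (\sum_i v i 0 ^+ 2).

Definition mxnorm2 {m n : nat} (A : 'M[R]_(m, n)) : R :=
  sup [set norm2 (A *m x) | x in [set x : 'cV[R]_n | norm2 x <= 1]].

Definition mxle {m n : nat} (A B : 'M[R]_(m, n)) : Prop :=
  forall i j, A i j <= B i j.

Definition loewner_le {n : nat} (A B : 'M[R]_n) : Prop :=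
  forall x : 'cV[R]_n, (x^T *m A *m x) 0 0 <= (x^T *m B *m x) 0 0.

Definition minkowski_ball {n : nat} (Om : set 'cV[R]_n) (rho : R) : set 'cV[R]_n :=
  [set v | exists o b, Om o /\ norm2 b <= 1 /\ v = o + rho *: b].

Definition boundary {n : nat} (Om : set 'cV[R]_n) : set 'cV[R]_n :=
  closure Om `\` interior Om.

Definition polyset {r p : nat} (M : 'M[R]_(r, p)) (mu : 'cV[R]_r) : set 'cV[R]_p :=
  [set th | mxle (M *m th) mu].

Definition bounded_set2 {n : nat} (S : set 'cV[R]_n) : Prop :=
  exists K : R, forall x, S x -> norm2 x <= K.

End Defs.

Section Prob.
Context {d : measure_display} {T : measurableType d} {R : realType}.

(* generators of the sigma-algebra sigma(X) of a random vector X (Borel on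
   R^n = product of the Borel sigma-algebras of the coordinates) *)
Definition rvec_gen {n : nat} (X : T -> 'cV[R]_n) : set (set T) :=
  [set A | exists (i : 'I_n) (B : set R), measurable B /\
           A = (fun x => X x i 0) @^-1` B].

Definition rvec_sigma {n : nat} (X : T -> 'cV[R]_n) : set (set T) :=
  <<s rvec_gen X >>.

Definition indep_seq (P : probability T R) {n : nat} (w : nat -> T -> 'cV[R]_n) : Prop :=
  forall (F : seq nat) (A : nat -> set T), uniq F ->
    (forall t, t \in F -> rvec_sigma (w t) (A t)) ->
    P (\big[setI/setT]_(t <- F) A t) = (\prod_(t <- F) P (A t))%E.

End Prob.

Section Sets.
Variable R : realType.
Variables (nx p r q : nat).

(* unfalsified set Delta_t (for t >= 1), for a fixed outcome omega *)
Definition Delta (Pi_w : 'M[R]_(q, nx)) (pi_w : 'cV[R]_q)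
  (D : nat -> 'M[R]_(nx, p)) (ths : 'cV[R]_p) (wt : nat -> 'cV[R]_nx) (t : nat)
  : set 'cV[R]_p :=
  [set th | mxle (Pi_w *m (D t.-1 *m (ths - th) + wt t.-1)) pi_w].

(* mu_{k N_u}, for k = 0, 1, 2, ...  *)
Fixpoint mu_upd (M : 'M[R]_(r, p)) (mu0 : 'cV[R]_r) (Nu : nat)
  (Dlt : nat -> set 'cV[R]_p) (k : nat) : 'cV[R]_r :=
  match k with
  | 0 => mu0
  | k'.+1 =>
      \col_i sup [set (M *m th) i 0 | th in
           polyset M (mu_upd M mu0 Nu Dlt k') `&`
           [set th | forall j, (k' * Nu < j <= k'.+1 * Nu)%N -> Dlt j th]]
  end.

Definition Theta_seq (M : 'M[R]_(r, p)) (mu0 : 'cV[R]_r) (Nu : nat)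
  (Dlt : nat -> set 'cV[R]_p) (t : nat) : set 'cV[R]_p :=
  polyset M (mu_upd M mu0 Nu Dlt (t %/ Nu)).

End Sets.

From HB Require Import structures.
From mathcomp Require Import all_boot all_order all_algebra.
From mathcomp Require Import all_classical all_reals all_analysis.
From mathcomp Require Import measurable_realfun.
From mathcomp Require Import ring lra zify.
Import Order.TTheory GRing.Theory Num.Theory.
Import numFieldNormedType.Exports.
Local Open Scope classical_set_scope.
Local Open Scope ring_scope.

(* Fix a row m_i of M and the k-th window of N_u regressors.  Persistent
   excitation makes the window Gram matrix G_k invertible, and z := G_k^-1 m_i^T
   satisfies  m_i d = sum_(t in window k) (D_t z).(D_t d)  with |D_t z| <= tau/beta.
   If theta survives the update closing window k, every D_t (ths - theta) + w_t
   lies in W, a subset of Omega + rho B; so if moreover each w_t of the window is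
   eps-close to a boundary point of Omega minimising the linear form D_t z, then
   m_i (theta - ths) <= N_u (tau/beta) (rho + n_x eps).  The windows are
   disjoint, hence by independence they are eps-good independently, each with
   probability at least p_w(eps)^N_u; so almost surely some window is eps-good,
   for every row and every eps = 1/(n+1), and eps -> 0 gives the bound. *)

Section VectorDot.
Context {R : realType} {n : nat}.
Implicit Types (u v h c : 'cV[R]_n) (a e rho : R).

Definition dot u v : R := \sum_l u l 0 * v l 0.

Lemma dotC u v : dot u v = dot v u.
Proof. by apply: eq_bigr => l _; rewrite mulrC. Qed.

Lemma dotDr u v v' : dot u (v + v') = dot u v + dot u v'.
Proof. by rewrite /dot -big_split; apply: eq_bigr => l _; rewrite mxE mulrDr. Qed.

Lemma dotNr u v : dot u (- v) = - dot u v.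
Proof. by rewrite /dot -sumrN; apply: eq_bigr => l _; rewrite mxE mulrN. Qed.

Lemma dotBr u v v' : dot u (v - v') = dot u v - dot u v'.
Proof. by rewrite dotDr dotNr. Qed.

Lemma dotZr a u v : dot u (a *: v) = a * dot u v.
Proof. by rewrite /dot mulr_sumr; apply: eq_bigr => l _; rewrite mxE mulrCA. Qed.

Lemma dot0r u : dot u 0 = 0.
Proof. by rewrite /dot big1 // => l _; rewrite mxE mulr0. Qed.

Lemma dotBl u u' v : dot (u - u') v = dot u v - dot u' v.
Proof. by rewrite dotC dotBr !(dotC v). Qed.

Lemma dotZl a u v : dot (a *: u) v = a * dot u v.
Proof. by rewrite dotC dotZr dotC. Qed.

Lemma dot0l u : dot 0 u = 0.
Proof. by rewrite dotC dot0r. Qed.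

Lemma dot_sumr (I : Type) (s : seq I) (F : I -> 'cV[R]_n) u :
  dot u (\sum_(i <- s) F i) = \sum_(i <- s) dot u (F i).
Proof.
elim: s => [|a s IH]; first by rewrite !big_nil dot0r.
by rewrite !big_cons dotDr IH.
Qed.

Lemma dot_ge0 v : 0 <= dot v v.
Proof. by apply: sumr_ge0 => l _; rewrite -expr2 sqr_ge0. Qed.

Lemma dot_eq0 {v : 'cV[R]_n} : dot v v = 0 -> v = 0.
Proof.
move=> /eqP; rewrite psumr_eq0; last by move=> l _; rewrite -expr2 sqr_ge0.
move=> /allP v0; apply/matrixP => i j; rewrite (ord1 j) mxE.
by have := v0 i (mem_index_enum _); rewrite mulf_eq0 orbb => /eqP.
Qed.

Lemma dot_sqr_le u v : dot u v ^+ 2 <= dot u u * dot v v.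
Proof.
have [v0|vn0] := eqVneq (dot v v) 0.
  by rewrite (dot_eq0 v0) dot0r expr0n /= dot0r mulr0.
have vp : 0 < dot v v by rewrite lt_def vn0 dot_ge0.
set t := dot u v / dot v v.
have := dot_ge0 (u - t *: v).
rewrite dotBl !dotBr !dotZl !dotZr (dotC v u).
have -> : dot u u - t * dot u v - (t * dot u v - t * (t * dot v v)) =
          dot u u - dot u v ^+ 2 / dot v v by rewrite /t; field; rewrite vn0.
by rewrite subr_ge0 ler_pdivrMr.
Qed.

Lemma norm2E v : norm2 v = Num.sqrt (dot v v).
Proof. by congr Num.sqrt; apply: eq_bigr => l _; rewrite expr2. Qed.

Lemma norm2_ge0 v : 0 <= norm2 v.
Proof. by rewrite norm2E sqrtr_ge0. Qed.

Lemma norm2_sqr v : norm2 v ^+ 2 = dot v v.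
Proof. by rewrite norm2E sqr_sqrtr // dot_ge0. Qed.

Lemma norm2_eq0 {v : 'cV[R]_n} : norm2 v = 0 -> v = 0.
Proof.
rewrite norm2E => /eqP; rewrite sqrtr_eq0 => v0; apply: dot_eq0.
by apply/eqP; rewrite eq_le v0 dot_ge0.
Qed.

Lemma norm2_0 : norm2 (0 : 'cV[R]_n) = 0.
Proof. by rewrite norm2E dot0r sqrtr0. Qed.

Lemma norm2Z a v : norm2 (a *: v) = `|a| * norm2 v.
Proof. by rewrite !norm2E dotZl dotZr mulrA -expr2 sqrtrM ?sqr_ge0 // sqrtr_sqr. Qed.

Lemma dot_le_norm2 u v : dot u v <= norm2 u * norm2 v.
Proof.
have [uv0|uv_gt0] := lerP (dot u v) 0.
  by apply: le_trans uv0 _; rewrite mulr_ge0 ?norm2_ge0.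
rewrite !norm2E -sqrtrM ?dot_ge0 // -(ger0_norm (ltW uv_gt0)) -sqrtr_sqr.
by rewrite ler_sqrt ?dot_sqr_le // mulr_ge0 ?dot_ge0.
Qed.

Lemma coord_le_norm2 v i : `|v i 0| <= norm2 v.
Proof.
rewrite /norm2 -sqrtr_sqr ler_sqrt; last by apply: sumr_ge0 => l _; exact: sqr_ge0.
by rewrite (bigD1 i) //= lerDl; apply: sumr_ge0 => l _; exact: sqr_ge0.
Qed.

Lemma dot_le_coord_close h v c e :
  (forall l, `|v l 0 - c l 0| < e) -> dot h v <= dot h c + n%:R * e * norm2 h.
Proof.
move=> vc; rewrite -lerBlDl -dotBr.
apply: (@le_trans _ _ (\sum_(l < n) e * norm2 h)); last first.
  by rewrite sumr_const card_ord -mulrA mulr_natl.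
apply: ler_sum => l _; rewrite mxE; apply: le_trans (ler_norm _) _.
rewrite normrM mulrC; apply: ler_pM => //; first by rewrite mxE ltW.
exact: coord_le_norm2.
Qed.

Lemma minkowski_ball_dot_ge {Om : set 'cV[R]_n} {rho h c u} :
  0 <= rho -> (forall o, Om o -> dot h c <= dot h o) -> minkowski_ball Om rho u ->
  dot h c - rho * norm2 h <= dot h u.
Proof.
move=> rho0 hc [x [b [Omx [b1 ->]]]]; rewrite dotDr dotZr lerD ?hc //.
rewrite -mulrN ler_wpM2l // lerNl -dotNr.
apply: le_trans (dot_le_norm2 _ _) _.
by rewrite -scaleN1r norm2Z normrN normr1 mul1r ler_piMr ?norm2_ge0.
Qed.

Lemma dot_continuous h : continuous (fun v : 'cV[R]_n => dot h v).
Proof.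
move=> x; apply: (@cvg_big R 'I_n +%R 0 xpredT add_continuous _ (nbhs x)
  (index_enum _) (fun l v => h l 0 * v l 0)) => l _.
by apply: cvgM; [exact: cvg_cst | exact: coord_continuous].
Qed.

End VectorDot.

Section MatrixDot.
Context {R : realType}.

Lemma dot_mulmx {m n} (A : 'M[R]_(m, n)) u v : dot u (A *m v) = dot (A^T *m u) v.
Proof.
rewrite /dot; under eq_bigr => i _ do rewrite mxE mulr_sumr.
rewrite exchange_big /=; apply: eq_bigr => j _.
by rewrite mxE mulr_suml; apply: eq_bigr => i _; rewrite mxE; ring.
Qed.

Lemma mulmx_row_dot {m n} (A : 'M[R]_(m, n)) v i : (A *m v) i 0 = dot (row i A)^T v.
Proof. by rewrite mxE; apply: eq_bigr => l _; rewrite !mxE. Qed.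

Lemma quad_form_dot {n} (A : 'M[R]_n) x : (x^T *m A *m x) 0 0 = dot x (A *m x).
Proof. by rewrite -mulmxA mxE; apply: eq_bigr => l _; rewrite !mxE. Qed.

Lemma mxnorm2_has_ubound {m n} (A : 'M[R]_(m, n)) :
  has_ubound [set norm2 (A *m x) | x in [set x : 'cV[R]_n | norm2 x <= 1]].
Proof.
exists (Num.sqrt (\sum_a dot (row a A)^T (row a A)^T)) => _ [x /= x1 <-].
rewrite norm2E ler_sqrt; last by apply: sumr_ge0 => a _; exact: dot_ge0.
rewrite [X in X <= _]/dot; apply: ler_sum => a _; rewrite mulmx_row_dot -expr2.
apply: le_trans (dot_sqr_le _ _) _; rewrite ler_piMr ?dot_ge0 //.
by rewrite -norm2_sqr expr_le1 ?norm2_ge0.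
Qed.

Lemma norm2_mulmx_le {m n} (A : 'M[R]_(m, n)) x : norm2 (A *m x) <= mxnorm2 A * norm2 x.
Proof.
have [->|xn0] := eqVneq x 0; first by rewrite mulmx0 !norm2_0 mulr0.
have x_gt0 : 0 < norm2 x.
  by rewrite lt_def norm2_ge0 andbT; apply: contra_neq xn0 => /norm2_eq0.
have x1 : norm2 ((norm2 x)^-1 *: x) <= 1.
  by rewrite norm2Z ger0_norm ?invr_ge0 ?norm2_ge0 // mulVf ?gt_eqF.
have : norm2 (A *m ((norm2 x)^-1 *: x)) <= mxnorm2 A.
  by apply: ub_le_sup; [exact: mxnorm2_has_ubound | exists ((norm2 x)^-1 *: x)].
rewrite -scalemxAr norm2Z ger0_norm ?invr_ge0 ?norm2_ge0 // => /(ler_wpM2r (ltW x_gt0)).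
by rewrite mulrAC mulVf ?gt_eqF // mul1r.
Qed.

Section Loewner.
Context {n : nat} {G : 'M[R]_n} {beta : R}.
Hypotheses (beta_gt0 : 0 < beta) (betaG : loewner_le beta%:M G).

Lemma loewner_dot_ge x : beta * dot x x <= dot x (G *m x).
Proof. by have := betaG x; rewrite !quad_form_dot mul_scalar_mx dotZr. Qed.

Lemma loewner_unitmx : G \in unitmx.
Proof.
rewrite -unitmx_tr -row_free_unit; apply: inj_row_free => v.
move=> /(congr1 trmx); rewrite trmx_mul trmxK trmx0 => Gv0.
have := loewner_dot_ge v^T; rewrite Gv0 dot0r pmulr_rle0 // => vv0.
have vT0 : v^T = 0 by apply: dot_eq0; apply/eqP; rewrite eq_le vv0 dot_ge0.
by rewrite -[v]trmxK vT0 trmx0.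
Qed.

Lemma norm2_invmx_loewner v : norm2 (invmx G *m v) <= norm2 v / beta.
Proof.
set y := invmx G *m v.
have Gy : G *m y = v by rewrite /y mulKVmx // loewner_unitmx.
have [y0|yn0] := eqVneq (norm2 y) 0; first by rewrite y0 divr_ge0 ?norm2_ge0 ?ltW.
have y_gt0 : 0 < norm2 y by rewrite lt_def yn0 norm2_ge0.
have := le_trans (loewner_dot_ge y) (dot_le_norm2 y (G *m y)).
rewrite -norm2_sqr expr2 mulrA [X in _ <= X]mulrC ler_pM2r // Gy => h.
by rewrite ler_pdivlMr // mulrC.
Qed.

End Loewner.
End MatrixDot.

Section BoundaryArgmin.
Context {R : realType} {n : nat} {Om : set 'cV[R]_n}.
Hypotheses (Om_compact : compact Om) (Om_neq0 : Om !=set0).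

(* From an interior minimiser, a small step against g would decrease the form. *)
Lemma boundary_argmin_dot (g : 'cV[R]_n) : g != 0 ->
  exists2 c, boundary Om c & forall x, Om x -> dot g c <= dot g x.
Proof.
move=> gn0; have [c /set_mem Omc cmin] := compact_EVT_min Om_neq0 Om_compact
  (continuous_subspaceT (dot_continuous g)).
exists c => [|x Omx]; last exact/cmin/mem_set.
split; first exact: subset_closure.
move=> /nbhs_ballP [e /= e_gt0 sub].
set s := e / (`|g| + 1).
have s_gt0 : 0 < s by rewrite divr_gt0 // ltr_pwDr.
have : ball c e (c - s *: g).
  rewrite mx_norm_ball /ball_ /= opprB addrC subrK normrZ gtr0_norm //.
  by rewrite /s mulrAC ltr_pdivrMr ?ltr_pwDr // ltr_pM2l // ltrDl.
move=> /sub /mem_set /cmin; rewrite dotBr dotZr => h.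
have : s * dot g g <= 0 by lra.
rewrite pmulr_rle0 // => gg0.
have /dot_eq0 g0 : dot g g = 0 by apply/eqP; rewrite eq_le gg0 dot_ge0.
by rewrite g0 eqxx in gn0.
Qed.

Lemma exists_boundary_argmin_dot (g : 'cV[R]_n) : (0 < n)%N ->
  exists2 c, boundary Om c & forall x, Om x -> dot g c <= dot g x.
Proof.
move=> n_gt0; have [->|gn0] := eqVneq g 0; last exact: boundary_argmin_dot.
have e0n0 : delta_mx (Ordinal n_gt0) 0 != 0 :> 'cV[R]_n.
  apply/negP => /eqP /matrixP /(_ (Ordinal n_gt0) 0).
  by rewrite !mxE !eqxx => /eqP; rewrite oner_eq0.
have [c bc _] := boundary_argmin_dot _ e0n0.
by exists c => // x _; rewrite !dot0l.
Qed.

End BoundaryArgmin.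

Lemma divn_window {Nu k t : nat} : (0 < Nu)%N ->
  (k * Nu <= t < k * Nu + Nu)%N -> (t %/ Nu)%N = k.
Proof.
move=> Nu_gt0 /andP [kt tk]; rewrite -(subnKC kt) divnMDl // divn_small ?addn0 //.
by rewrite ltn_subLR.
Qed.

Lemma le_of_forall_le_addS {R : realType} (a b c : R) : 0 <= c ->
  (forall n, a <= b + c / n.+1%:R) -> a <= b.
Proof.
move=> c0 abc; apply/ler_addgt0Pr => e e_gt0.
have ce0 : 0 <= c / e by rewrite divr_ge0 // ltW.
set n := Num.bound (c / e); have := archi_boundP ce0; rewrite -/n => cen.
apply: le_trans (abc n) _; rewrite lerD2l ler_pdivrMr ?ltr0Sn // mulrC.
by rewrite -ler_pdivrMr // ltW // (lt_le_trans cen) // ler_nat.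
Qed.

Section WindowBound.
Context {R : realType} {nx p r q : nat}.
Variables (ths : 'cV[R]_p) (Pi_w : 'M[R]_(q, nx)) (pi_w : 'cV[R]_q)
  (D : nat -> 'M[R]_(nx, p)) (tau beta : R) (Nu : nat) (Om : set 'cV[R]_nx)
  (rho : R) (M : 'M[R]_(r, p)) (mu0 : 'cV[R]_r).
Hypotheses (tau_gt0 : 0 < tau) (beta_gt0 : 0 < beta) (Nu_gt0 : (0 < Nu)%N)
  (D_norm : forall t, mxnorm2 (D t) <= tau)
  (D_PE : forall t, loewner_le (beta%:M) (\sum_(t <= j < t + Nu) (D j)^T *m D j))
  (rho_gt0 : 0 < rho)
  (Om_W : Om `<=` polyset Pi_w pi_w)
  (W_Om : polyset Pi_w pi_w `<=` minkowski_ball Om rho)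
  (M_row : forall i : 'I_r, norm2 (row i M)^T = 1)
  (M_bounded : forall mu : 'cV[R]_r, bounded_set2 (polyset M mu))
  (mu0_ths : polyset M mu0 ths).

Definition window_gram k := \sum_(k * Nu <= j < k * Nu + Nu) (D j)^T *m D j.

Definition row_dual i k := invmx (window_gram k) *m (row i M)^T.

Definition dual_regressor i t := D t *m row_dual i (t %/ Nu).

Lemma row_dual_norm i k : norm2 (row_dual i k) <= beta^-1.
Proof.
by apply: le_trans (norm2_invmx_loewner beta_gt0 (D_PE _) _) _; rewrite M_row mul1r.
Qed.

Lemma regressor_row_dual_norm t i k : norm2 (D t *m row_dual i k) <= tau / beta.
Proof.
apply: le_trans (norm2_mulmx_le _ _) _.
apply: (@le_trans _ _ (tau * norm2 (row_dual i k))).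
  by rewrite ler_wpM2r ?norm2_ge0.
by rewrite ler_wpM2l ?row_dual_norm // ltW.
Qed.

Lemma row_dot_window i k (dl : 'cV[R]_p) :
  dot (row i M)^T dl =
  \sum_(k * Nu <= t < k * Nu + Nu) dot (D t *m row_dual i k) (D t *m dl).
Proof.
have G_unit := loewner_unitmx beta_gt0 (D_PE (k * Nu)).
have -> : (row i M)^T = window_gram k *m row_dual i k by rewrite mulKVmx.
rewrite dotC mulmx_suml dot_sumr.
by apply: eq_bigr => t _; rewrite -mulmxA dot_mulmx trmxK dotC.
Qed.

Variables (wt : nat -> 'cV[R]_nx) (w0 : 'I_r -> nat -> 'cV[R]_nx).
Hypotheses (wt_Om : forall t, Om (wt t))
  (w0_argmin : forall i t x, Om x ->
     dot (dual_regressor i t) (w0 i t) <= dot (dual_regressor i t) x).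

Let Dlt := Delta Pi_w pi_w D ths wt.
Let mu k := mu_upd M mu0 Nu Dlt k.

Lemma Delta_truth j : Dlt j ths.
Proof. by rewrite /Dlt /Delta /= subrr mulmx0 add0r; exact: Om_W. Qed.

Lemma polyset_row_has_ubound i mu' (S : set 'cV[R]_p) :
  has_ubound [set (M *m th) i 0 | th in polyset M mu' `&` S].
Proof.
have [K hK] := M_bounded mu'; exists K => _ [th [th_mu _] <-].
rewrite mulmx_row_dot; apply: le_trans (dot_le_norm2 _ _) _.
by rewrite M_row mul1r; exact: hK.
Qed.

Lemma mu_upd_truth k : polyset M (mu k) ths.
Proof.
elim: k => [|k IH] //= i j; rewrite (ord1 j) [X in _ <= X]mxE.
apply: ub_le_sup; first exact: polyset_row_has_ubound.
by exists ths => //; split => // j' _; exact: Delta_truth.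
Qed.

Lemma window_term_bound i k t th e : 0 <= e ->
  (k * Nu <= t < k * Nu + Nu)%N -> Dlt t.+1 th ->
  (forall l, `|wt t l 0 - w0 i t l 0| < e) ->
  - dot (D t *m row_dual i k) (D t *m (ths - th)) <= tau / beta * (rho + nx%:R * e).
Proof.
move=> e0 t_win Dlt_th wt_close; set h := D t *m row_dual i k.
have h_dual : dual_regressor i t = h by rewrite /dual_regressor (divn_window Nu_gt0 t_win).
have h_norm : norm2 h <= tau / beta by exact: regressor_row_dual_norm.
set u := D t *m (ths - th) + wt t.
have u_W : polyset Pi_w pi_w u by exact: Dlt_th.
have u_ge := minkowski_ball_dot_ge (ltW rho_gt0) (w0_argmin i t) (W_Om _ u_W).
have wt_le := dot_le_coord_close h _ _ _ wt_close.
rewrite h_dual in u_ge.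
have -> : D t *m (ths - th) = u - wt t by rewrite /u addrK.
rewrite dotBr opprB.
have bound_ge0 : 0 <= rho + nx%:R * e by rewrite addr_ge0 ?mulr_ge0 // ltW.
have := ler_wpM2r bound_ge0 h_norm.
have := norm2_ge0 h.
nra.
Qed.

Lemma mu_upd_window_bound i k e : 0 <= e ->
  (forall t, (k * Nu <= t < k * Nu + Nu)%N ->
     forall l, `|wt t l 0 - w0 i t l 0| < e) ->
  mu k.+1 i 0 <= (M *m ths) i 0 + Nu%:R * (tau / beta * (rho + nx%:R * e)).
Proof.
move=> e0 wt_close; rewrite /mu /= mxE; apply: ge_sup.
  exists ((M *m ths) i 0), ths => //.
  by split; [exact: mu_upd_truth | move=> j _; exact: Delta_truth].
move=> _ [th [_ /= Dlt_th] <-].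
rewrite !mulmx_row_dot.
have -> : dot (row i M)^T th = dot (row i M)^T ths - dot (row i M)^T (ths - th).
  by rewrite dotBr; lra.
rewrite lerD2l (row_dot_window i k) -sumrN.
apply: (@le_trans _ _ (\sum_(k * Nu <= t < k * Nu + Nu) (tau / beta * (rho + nx%:R * e)))).
  apply: ler_sum_nat => t t_win; apply: window_term_bound => //; last exact: wt_close.
  by apply: Dlt_th; move: t_win; rewrite mulSnr; lia.
by rewrite sumr_const_nat addKn [X in _ <= X]mulr_natl.
Qed.

Lemma window_bound th :
  (forall t, Theta_seq M mu0 Nu Dlt t th) ->
  (forall i n, exists k, forall t, (k * Nu <= t < k * Nu + Nu)%N ->
      forall l, `|wt t l 0 - w0 i t l 0| < n.+1%:R^-1) ->
  mxle (M *m (th - ths)) (const_mx (rho * Nu%:R * tau / beta)).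
Proof.
move=> th_Theta good_window i j.
rewrite (ord1 j) [X in _ <= X]mxE mulmxBr [X in X <= _]mxE [X in _ + X <= _]mxE.
apply: (@le_of_forall_le_addS _ _ _ (Nu%:R * (tau / beta) * nx%:R)).
  by rewrite mulr_ge0 // mulr_ge0 // divr_ge0 // ltW.
move=> n; have [k wt_close] := good_window i n.
have e_ge0 : 0 <= n.+1%:R^-1 :> R by rewrite invr_ge0.
have := mu_upd_window_bound _ _ _ e_ge0 wt_close.
have := th_Theta (k.+1 * Nu)%N i 0; rewrite /Theta_seq mulnK // -/(mu k.+1).
have -> : Nu%:R * (tau / beta * (rho + nx%:R * n.+1%:R^-1)) =
          rho * Nu%:R * tau / beta + Nu%:R * (tau / beta) * nx%:R / n.+1%:R by ring.
by move=> th_mu mu_ths; rewrite lerBlDl (le_trans th_mu mu_ths).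
Qed.

End WindowBound.

Lemma g_sigma_bigsetI {T : Type} (G : set (set T)) (I : Type) (s : seq I)
    (F : I -> set T) :
  (forall i, <<s G >> (F i)) -> <<s G >> (\big[setI/setT]_(i <- s) F i).
Proof.
move=> GF; have [GT _ _ GI] :=
  (sigma_algebraP (fun X _ => @subsetT _ X)).1 (smallest_sigma_algebra [set: T] G).
by elim: s => [|i s IH]; rewrite ?big_nil ?big_cons //; apply: GI.
Qed.

Section CoordinateBox.
Context {d : measure_display} {T : measurableType d} {R : realType} {n : nat}.
Variable v : T -> 'cV[R]_n.
Hypothesis v_meas : forall l : 'I_n, measurable_fun setT (fun x => v x l 0).

(* Unlike the Euclidean ball, the box is a finite intersection of generators of
   sigma(v), the sigma-algebra independence is stated for. *)
Definition coord_box (c : 'cV[R]_n) (e : R) : set T :=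
  [set x | forall l, `|v x l 0 - c l 0| < e].

Lemma coord_boxE c e : coord_box c e =
  \big[setI/setT]_(l <- enum 'I_n) ((fun x => v x l 0) @^-1` `](c l 0 - e), (c l 0 + e)[).
Proof.
rewrite -bigcap_seq; apply/seteqP; split => x /= x_box l.
  by move=> _; rewrite /= in_itv /= -ltr_distl.
by have := x_box l (mem_enum _ _); rewrite /= in_itv /= -ltr_distl.
Qed.

Lemma coord_box_sigma c e : rvec_sigma v (coord_box c e).
Proof.
rewrite coord_boxE; apply: g_sigma_bigsetI => l; apply: sub_sigma_algebra.
by exists l, `](c l 0 - e), (c l 0 + e)[%classic; split => //; exact: measurable_itv.
Qed.

Lemma coord_box_measurable c e : measurable (coord_box c e).
Proof.
rewrite coord_boxE; apply: bigsetI_measurable => l _.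
by rewrite -[X in measurable X]setTI; apply: v_meas => //; exact: measurable_itv.
Qed.

Lemma norm2_ball_measurable c e : measurable [set x | norm2 (v x - c) < e].
Proof.
have sq_meas : measurable_fun setT (fun x => \sum_(l < n) (v x - c) l 0 ^+ 2).
  apply: measurable_sum => l; apply: measurable_funX.
  under eq_fun do rewrite !mxE.
  by apply: measurable_funB => //; exact: measurable_cst.
have := measurableT_comp (continuous_measurable_fun (@sqrt_continuous R)) sq_meas.
by move=> /(_ measurableT `]-oo, e[%classic (measurable_itv _)); rewrite setTI.
Qed.

Lemma norm2_ball_sub_coord_box c e : [set x | norm2 (v x - c) < e] `<=` coord_box c e.
Proof.
move=> x /= vc l; apply: le_lt_trans vc.
by have := coord_le_norm2 (v x - c) l; rewrite !mxE.
Qed.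

End CoordinateBox.

Section IndependentWindows.
Context {d : measure_display} {T : measurableType d} {R : realType}.
Variable P : probability T R.

Definition pr (X : set T) : R := fine (P X).

Lemma prE X : measurable X -> P X = (pr X)%:E.
Proof. by move=> mX; rewrite /pr fineK // fin_num_measure. Qed.

Lemma pr_ge0 X : 0 <= pr X.
Proof. by rewrite /pr fine_ge0 // measure_ge0. Qed.

Lemma pr_le1 X : measurable X -> pr X <= 1.
Proof. by move=> mX; rewrite -lee_fin -prE // probability_le1. Qed.

Lemma le_pr X Y : measurable X -> measurable Y -> X `<=` Y -> pr X <= pr Y.
Proof. by move=> mX mY XY; rewrite -lee_fin -!prE // le_measure // inE. Qed.

Variables (n : nat) (w : nat -> T -> 'cV[R]_n) (A : nat -> set T) (Nu : nat).
Hypotheses (w_indep : indep_seq P w) (A_sigma : forall t, rvec_sigma (w t) (A t))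
  (A_meas : forall t, measurable (A t)).

Definition inter_events (F : seq nat) := \big[setI/setT]_(t <- F) A t.

Definition window_event k := inter_events (iota (k * Nu) Nu).

Fixpoint no_window_before m :=
  if m is m'.+1 then no_window_before m' `&` ~` window_event m' else setT.

Lemma inter_events_measurable F : measurable (inter_events F).
Proof. by apply: bigsetI_measurable => t _; exact: A_meas. Qed.

Lemma no_window_before_measurable m : measurable (no_window_before m).
Proof.
elim: m => [|m IH] /=; first exact: measurableT.
by apply: measurableI => //; apply: measurableC; exact: inter_events_measurable.
Qed.

Lemma pr_inter_events F : uniq F -> pr (inter_events F) = \prod_(t <- F) pr (A t).
Proof.
move=> uF; rewrite /pr /inter_events (w_indep F A uF (fun t _ => A_sigma t)).
rewrite (eq_bigr (fun t => (pr (A t))%:E)) ?prodEFin // => t _.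
by rewrite -prE.
Qed.

Lemma pr_no_window_inter m F : uniq F -> (forall t, t \in F -> (m * Nu <= t)%N) ->
  pr (no_window_before m `&` inter_events F) =
  (\prod_(k < m) (1 - pr (window_event k))) * pr (inter_events F).
Proof.
elim: m F => [|m IH] F uF F_ge; first by rewrite /= setTI big_ord0 mul1r.
set s := iota (m * Nu) Nu.
have F_ge' t : t \in F -> (m * Nu <= t)%N.
  by move=> /F_ge; apply: leq_trans; rewrite leq_mul2r leqnSn orbT.
have usF : uniq (s ++ F).
  rewrite cat_uniq iota_uniq uF andbT /=; apply/hasPn => t /F_ge.
  by rewrite mem_iota mulSnr addnC => /leq_gtF ->; rewrite andbF.
have sF_ge t : t \in s ++ F -> (m * Nu <= t)%N.
  by rewrite mem_cat mem_iota => /orP [/andP [] //|/F_ge'].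
have XF_meas : measurable (no_window_before m `&` inter_events F).
  by apply: measurableI; [exact: no_window_before_measurable | exact: inter_events_measurable].
have XsF_meas : measurable (no_window_before m `&` inter_events (s ++ F)).
  by apply: measurableI; [exact: no_window_before_measurable | exact: inter_events_measurable].
have := (measureDI P XF_meas (inter_events_measurable s) : P _ = (P _ + P _)%E).
have -> : (no_window_before m `&` inter_events F) `\` inter_events s =
          no_window_before m.+1 `&` inter_events F by rewrite /= setDE setIAC.
have -> : no_window_before m `&` inter_events F `&` inter_events s =
          no_window_before m `&` inter_events (s ++ F).
  by rewrite /inter_events big_cat /= -setIA (setIC (inter_events F)).
rewrite !prE //; last first.
  by apply: measurableI; [exact: no_window_before_measurable | exact: inter_events_measurable].
rewrite -EFinD => -[] split_m.
have pr_sF : pr (inter_events (s ++ F)) = pr (window_event m) * pr (inter_events F).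
  by rewrite !pr_inter_events ?iota_uniq // big_cat.
rewrite big_ord_recr /= (_ : pr _ = pr (no_window_before m `&` inter_events F) -
  pr (no_window_before m `&` inter_events (s ++ F))); last by rewrite split_m; ring.
by rewrite IH // IH // pr_sF; ring.
Qed.

Lemma pr_no_window_before m :
  pr (no_window_before m) = \prod_(k < m) (1 - pr (window_event k)).
Proof.
have := @pr_no_window_inter m [::] isT (fun t (t0 : t \in [::]) => ltac:(by [])).
by rewrite /inter_events big_nil setIT /pr probability_setT mulr1.
Qed.

Lemma window_eventP k x :
  window_event k x <-> forall t, (k * Nu <= t < k * Nu + Nu)%N -> A t x.
Proof.
rewrite /window_event /inter_events -bigcap_seq.
by split => Ax t; [rewrite -mem_iota; exact: Ax | rewrite /= mem_iota; exact: Ax].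
Qed.

Lemma pr_window_event_ge p0 k : 0 <= p0 -> (forall t, p0 <= pr (A t)) ->
  p0 ^+ Nu <= pr (window_event k).
Proof.
move=> p0_ge0 pA; rewrite pr_inter_events ?iota_uniq //.
have -> : p0 ^+ Nu = \prod_(k * Nu <= t < k * Nu + Nu) p0 by rewrite prodr_const_nat addKn.
by rewrite /index_iota addKn; apply: ler_prod => t _; rewrite p0_ge0 pA.
Qed.

(* Second Borel--Cantelli lemma for the independent window events. *)
Lemma ae_exists_window p0 : 0 < p0 -> (forall t, p0 <= pr (A t)) ->
  {ae P, forall x, exists k, window_event k x}.
Proof.
move=> p0_gt0 pA; set q := p0 ^+ Nu.
have q_win k : q <= pr (window_event k) by apply: pr_window_event_ge => //; exact: ltW.
have q_gt0 : 0 < q by exact: exprn_gt0.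
have q_le1 : q <= 1 := le_trans (q_win 0%N) (pr_le1 _ (inter_events_measurable _)).
set B := \bigcap_k ~` window_event k.
have B_meas : measurable B.
  by apply: bigcapT_measurable => k; apply: measurableC; exact: inter_events_measurable.
have pr_B m : pr B <= (1 - q) ^+ m.
  apply: le_trans (le_pr _ _ B_meas (no_window_before_measurable m) _) _.
    by elim: m => [|m IH] x //= Bx; split; [exact: IH | exact: Bx].
  have -> : (1 - q) ^+ m = \prod_(k < m) (1 - q) by rewrite prodr_const card_ord.
  rewrite pr_no_window_before.
  apply: ler_prod => k _; rewrite lerB ?q_win // subr_ge0 pr_le1 //.
  exact: inter_events_measurable.
have q_lim : (fun m => (1 - q) ^+ m) @ \oo --> 0 by apply: cvg_expr; rewrite ger0_norm; lra.
change (P.-negligible (~` [set x | exists k, window_event k x])).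
have -> : ~` [set x | exists k, window_event k x] = B.
  apply/seteqP; split => x /=; first by move=> no_k k _ wk; apply: no_k; exists k.
  by move=> Bx [k]; exact: Bx.
apply/negligibleP => //; apply: eq_trans (prE _ B_meas) _; congr EFin.
apply/eqP; rewrite eq_le pr_ge0 andbT.
rewrite -(cvg_lim (@Rhausdorff R) q_lim); apply: limr_ge; first exact: cvgP q_lim.
exact: nearW.
Qed.

End IndependentWindows.

Lemma ae_exists_close_window {d : measure_display} {T : measurableType d}
    {R : realType} (P : probability T R) {n : nat} (w : nat -> T -> 'cV[R]_n)
    (Nu : nat) (c : nat -> 'cV[R]_n) (e p0 : R) :
  (forall t (l : 'I_n), measurable_fun setT (fun x => w t x l 0)) ->
  indep_seq P w -> 0 < p0 ->
  (forall t, (p0%:E <= P [set x | (norm2 (w t x - c t) < e)%R])%E) ->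
  {ae P, forall x, exists k, forall t, (k * Nu <= t < k * Nu + Nu)%N ->
     forall l, `|w t x l 0 - c t l 0| < e}.
Proof.
move=> w_meas w_indep p0_gt0 p0_ball.
set A := fun t => coord_box (w t) (c t) e.
have A_meas t : measurable (A t) by exact: coord_box_measurable.
apply: filterS (ae_exists_window _ _ _ _ _ w_indep (fun t => coord_box_sigma _ _ _)
  A_meas _ p0_gt0 _).
  by move=> x [k /window_eventP Ax]; exists k => t /Ax.
move=> t; have ball_meas := norm2_ball_measurable _ (w_meas t) (c t) e.
apply: le_trans _ (le_pr _ _ _ ball_meas (A_meas t) (norm2_ball_sub_coord_box _ _ _)).
by rewrite -lee_fin -prE.
Qed.

Theorem corollary5
  (R : realType) (d : measure_display) (T : measurableType d)
  (P : probability T R)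
  (nx p r q : nat) (hnx : (0 < nx)%N) (hp : (0 < p)%N)
  (ths : 'cV[R]_p)
  (Pi_w : 'M[R]_(q, nx)) (pi_w : 'cV[R]_q)
  (hpi : forall i, 0 < pi_w i 0)
  (hWc : compact (polyset Pi_w pi_w))
  (w : nat -> T -> 'cV[R]_nx)
  (hwmeas : forall t (i : 'I_nx), measurable_fun setT (fun x => w t x i 0))
  (hindep : indep_seq P w)
  (D : nat -> 'M[R]_(nx, p))
  (tau beta : R) (Nu : nat)
  (htau : 0 < tau) (hbeta : 0 < beta)
  (hNu : ((p + nx - 1) %/ nx <= Nu)%N)
  (hDnorm : forall t, mxnorm2 (D t) <= tau)
  (hPE : forall t, loewner_le (beta%:M)
          (\sum_(t <= j < t + Nu) (D j)^T *m D j))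
  (Om : set 'cV[R]_nx) (rho : R) (hOmc : compact Om) (hrho : 0 < rho)
  (hOmW : Om `<=` polyset Pi_w pi_w)
  (hWOm : polyset Pi_w pi_w `<=` minkowski_ball Om rho)
  (hwOm : forall t x, Om (w t x))
  (pw : R -> R) (hpw : forall e : R, 0 < e -> 0 < pw e <= 1)
  (hpw_bd : forall (w0 : 'cV[R]_nx) (e : R) (t : nat), boundary Om w0 -> 0 < e ->
      ((pw e)%:E <= P [set x | (norm2 (w t x - w0) < e)%R])%E)
  (M : 'M[R]_(r, p))
  (hM : forall i : 'I_r, norm2 (row i M)^T = 1)
  (hMb : forall mu : 'cV[R]_r, bounded_set2 (polyset M mu))
  (mu0 : 'cV[R]_r) (hmu0 : polyset M mu0 ths) :
  {ae P, forall x,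
     \bigcap_(t in [set: nat])
        Theta_seq M mu0 Nu (fun j => Delta Pi_w pi_w D ths (fun s => w s x) j) t
     `<=` [set th | mxle (M *m (th - ths)) (const_mx (rho * Nu%:R * tau / beta))]}.
Proof.
have Nu_gt0 : (0 < Nu)%N by apply: leq_trans hNu; rewrite divn_gt0 //; lia.
have [[x0 _]|T0] := pselect (exists x : T, True); last first.
  by apply: aeW => x; exfalso; apply: T0; exists x.
have Om_neq0 : Om !=set0 by exists (w 0%N x0).
have /choice [w0 w0_spec] : forall it : 'I_r * nat, exists c, boundary Om c /\
    forall o, Om o -> dot (dual_regressor D Nu M it.1 it.2) c <=
                      dot (dual_regressor D Nu M it.1 it.2) o.
  move=> [i t]; have [c c_bd c_min] :=
    exists_boundary_argmin_dot hOmc Om_neq0 (dual_regressor D Nu M i t) hnx.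
  by exists c.
have e_gt0 n : 0 < n.+1%:R^-1 :> R by rewrite invr_gt0.
have all_close : {ae P, forall x, forall i n, exists k, forall t,
    (k * Nu <= t < k * Nu + Nu)%N -> forall l, `|w t x l 0 - w0 (i, t) l 0| < n.+1%:R^-1}.
  apply: filter_forall => i; apply: ae_foralln => n.
  have [pw_gt0 _] := andP (hpw _ (e_gt0 n)).
  apply: ae_exists_close_window hwmeas hindep pw_gt0 _ => t.
  exact: hpw_bd (w0_spec (i, t)).1 (e_gt0 n).
apply: filterS all_close => x x_close th th_Theta.
exact: (window_bound _ _ _ _ _ _ _ _ _ _ _ htau hbeta Nu_gt0 hDnorm hPE hrho hOmW hWOm
  hM hMb hmu0 _ _ (fun t => hwOm t x) (fun i t => (w0_spec (i, t)).2) _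
  (fun t => th_Theta t I) x_close).
Qed.
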